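(* Let $S\subseteq\{0,1\}^n$, $1\le m\le n$, $f\in[0,1/2]$, and $h\in_R\mathcal{H}^f_{m\times n}$. Then $$|S|\le\min\left\{z\ \middle|\ \frac{1}{1+2^{2m}v(z)/z^2}>\Pr[S(h)\ge1]\right\},$$ where $z$ ranges over integers $1\le z\le 2^n$ and the minimum of the empty set is $+\infty$.
   Context: $h\in_R\mathcal{H}^f_{m\times n}$ means $h(x)=Ax+b\bmod 2$ with $A\in\{0,1\}^{m\times n}$ having i.i.d. entries with $\Pr[A_{ij}=1]=f$ and $b\in\{0,1\}^m$ uniform and independent of $A$; $S(h)=|\{x\in S:h(x)=0\}|$. For integer $1\le q\le 2^n+1$: $w^*(n,q)=\max\{w\ge0:\sum_{j=1}^w\binom{n}{j}\le q-1\}$, $r(n,q)=q-1-\sum_{w=1}^{w^*(n,q)}\binom{n}{w}$, $$(q-1)\,\epsilon(n,m,q,f)=\sum_{w=1}^{w^*(n,q)}\binom{n}{w}\frac{(1+(1-2f)^w)^m}{2^m}+\frac{r(n,q)}{2^m}(1+(1-2f)^{w^*(n,q)+1})^m,$$ and $v(q)=\frac{q}{2^m}\left(1+\epsilon(n,m,q,f)(q-1)-\frac{q}{2^m}\right)$. *)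

From HB Require Import structures.
From mathcomp Require Import all_boot all_order all_algebra.
From mathcomp Require Import reals.
Set Implicit Arguments. Unset Strict Implicit. Unset Printing Implicit Defensive.
Import Order.TTheory GRing.Theory Num.Theory.
Local Open Scope ring_scope.

(* Vectors in {0,1}^n are column vectors over GF(2) = 'F_2. *)

Definition weightA (R : realType) (m n : nat) (f : R) (A : 'M['F_2]_(m, n)) : R :=
  \prod_(i < m) \prod_(j < n) (if A i j == 1 then f else 1 - f).

(* S(h) = |{x in S : A x + b = 0}| for h(x) = A x + b mod 2. *)
Definition Sh (m n : nat) (S : {set 'cV['F_2]_n})
  (A : 'M['F_2]_(m, n)) (b : 'cV['F_2]_m) : nat :=
  #|[set x in S | A *m x + b == 0]|.

(* Pr[S(h) >= 1] for h drawn from H^f_{m x n} (b uniform, independent of A). *)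
Definition PrSh_ge1 (R : realType) (m n : nat) (f : R) (S : {set 'cV['F_2]_n}) : R :=
  \sum_(A : 'M['F_2]_(m, n)) \sum_(b : 'cV['F_2]_m)
     weightA f A * (2%:R ^+ m)^-1 * (if (1 <= Sh S A b)%N then 1 else 0).

Definition wstar (n q : nat) : nat :=
  \max_(w < n.+1 | (\sum_(1 <= j < w.+1) 'C(n, j) <= q.-1)%N) w.

Definition rnq (n q : nat) : nat :=
  (q.-1 - \sum_(1 <= w < (wstar n q).+1) 'C(n, w))%N.

(* (q-1) * eps(n,m,q,f) *)
Definition eps_q (R : realType) (n m q : nat) (f : R) : R :=
  \sum_(1 <= w < (wstar n q).+1)
     ('C(n, w))%:R * ((1 + (1 - 2 * f) ^+ w) ^+ m / 2%:R ^+ m)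
  + (rnq n q)%:R / 2%:R ^+ m * (1 + (1 - 2 * f) ^+ (wstar n q).+1) ^+ m.

Definition vq (R : realType) (n m q : nat) (f : R) : R :=
  q%:R / 2%:R ^+ m * (1 + eps_q n m q f - q%:R / 2%:R ^+ m).

(* Second-moment method.  Fix T <= S with |T| = z and let X = T(h).  Each x
   is hashed to 0 with probability 2^-m, so E[X] = z/2^m.  For x, y in T the
   event h(x) = h(y) = 0 has probability 2^-m Pr[A(y - x) = 0], and a biased
   row is orthogonal to d with probability (1 + (1 - 2f)^|d|)/2, which
   decreases with the weight |d|.  Hence the y <> x terms of E[X^2] are at most
   those of the z - 1 lightest nonzero vectors, whose total is (z - 1) eps,
   giving E[X^2] <= (1 + (z - 1) eps) E[X].  Since k^2 >= 2sk - s^2 [k >= 1],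
   this yields Pr[S(h) >= 1] >= Pr[X >= 1] >= E[X] / (1 + (z - 1) eps), which
   is exactly the bound of the hypothesis, so |S| > z is impossible. *)

From HB Require Import structures.
From mathcomp Require Import all_boot all_order all_algebra.
From mathcomp Require Import reals.
From mathcomp Require Import ring lra.
Set Implicit Arguments. Unset Strict Implicit. Unset Printing Implicit Defensive.
Import Order.TTheory GRing.Theory Num.Theory.
Local Open Scope ring_scope.

Lemma second_moment_bound (R : realFieldType) (I : finType) (P : I -> R) (X : I -> nat) s :
  (forall i, 0 <= P i) -> 0 < s ->
  \sum_i P i * (X i)%:R ^+ 2 <= s * \sum_i P i * (X i)%:R ->
  \sum_i P i * (X i)%:R <= s * \sum_i P i * (if (1 <= X i)%N then 1 else 0).
Proof.
move=> P_ge0 s_gt0 second_le.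
have pointwise i : 2%:R * s * (X i)%:R - s ^+ 2 * (if (1 <= X i)%N then 1 else 0)
    <= (X i)%:R ^+ 2.
  case: (X i) => [|k] /=; first by rewrite mulr0 mulr0 subrr expr0n.
  by have := sqr_ge0 (k.+1%:R - s); lra.
have : 2%:R * s * \sum_i P i * (X i)%:R
       - s ^+ 2 * \sum_i P i * (if (1 <= X i)%N then 1 else 0)
    <= s * \sum_i P i * (X i)%:R.
  apply: (le_trans _ second_le); rewrite !mulr_sumr -sumrB; apply: ler_sum => i _.
  rewrite (_ : _ - _ = P i * (2%:R * s * (X i)%:R - s ^+ 2 * (if (1 <= X i)%N then 1 else 0))).
    by apply: ler_wpM2l; [exact: P_ge0 | exact: pointwise].
  by set t := (if _ then _ else _); ring.
set E := \sum_i _ * (X i)%:R; set Pr := \sum_i _ * (if _ then _ else _).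
by move=> le_E; rewrite -(ler_pM2l s_gt0) mulrA -expr2; lra.
Qed.

Lemma subset_of_card (T : finType) (S : {set T}) k : (k <= #|S|)%N ->
  exists2 U : {set T}, U \subset S & #|U| = k.
Proof.
move=> le_kS; exists [set x in take k (enum S)].
  by apply/subsetP => x; rewrite inE => /mem_take; rewrite mem_enum.
rewrite cardsE (card_uniqP _) ?take_uniq ?enum_uniq //.
by rewrite size_takel // -cardE.
Qed.

Lemma F2_cases (a : 'F_2) : a = 0 \/ a = 1.
Proof. by case: a => [[|[|k]] Hk]; [left; exact: val_inj | right; exact: val_inj |]. Qed.

Lemma sum_F2 (V : nmodType) (F : 'F_2 -> V) : \sum_(a : 'F_2) F a = F 0 + F 1.
Proof. by rewrite (bigD1 0) //= (big_pred1 1) // => a /=; case: (F2_cases a) => ->. Qed.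

Definition hweight n (d : 'cV['F_2]_n) : nat := #|[set j | d j 0 != 0]|.

Lemma hweight0 n : hweight (0 : 'cV['F_2]_n) = 0%N.
Proof. by apply/eqP; rewrite cards_eq0; apply/eqP/setP => j; rewrite !inE mxE eqxx. Qed.

Lemma hweight_gt0 n (d : 'cV['F_2]_n) : d != 0 -> (0 < hweight d)%N.
Proof.
move=> d_neq0; rewrite card_gt0; apply: contra d_neq0 => /eqP supp0.
apply/eqP/matrixP => j k; rewrite ord1 mxE.
by apply/eqP; apply: contraT => djk; rewrite -(in_set0 j) -supp0 inE.
Qed.

Lemma card_hweight n w : (#|[set d : 'cV['F_2]_n | hweight d == w]| <= 'C(n, w))%N.
Proof.
pose supp (d : 'cV['F_2]_n) := [set j | d j 0 != 0].
have supp_inj : injective supp.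
  move=> d1 d2 eq_supp; apply/matrixP => j k; rewrite ord1.
  have := congr1 (fun B : {set 'I_n} => j \in B) eq_supp; rewrite /= !inE.
  by case: (F2_cases (d1 j 0)) => ->; case: (F2_cases (d2 j 0)) => ->.
rewrite -(card_imset _ supp_inj) -[n in 'C(n, _)]card_ord -card_draws.
by apply/subset_leq_card/subsetP => B /imsetP [d]; rewrite !inE => wd ->.
Qed.

Section Characters.
Variable R : numFieldType.

Definition signF2 (a : 'F_2) : R := if a == 0 then 1 else -1.

Lemma signF2D a b : signF2 (a + b) = signF2 a * signF2 b.
Proof.
by case: (F2_cases a) => ->; case: (F2_cases b) => ->;
  rewrite /signF2 ?add0r ?addr0 ?eqxx ?mul1r ?mulr1 // mulrNN mulr1.
Qed.

Lemma signF2_sum (I : finType) (x : I -> 'F_2) :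
  signF2 (\sum_i x i) = \prod_i signF2 (x i).
Proof. by apply: big_morph; [exact: signF2D | rewrite /signF2 eqxx]. Qed.

Lemma eqF2_0_signF2 a : ((a == 0)%:R : R) = (1 + signF2 a) / 2%:R.
Proof. by rewrite /signF2; case: (a == 0) => /=; [field | rewrite subrr mul0r]. Qed.

Definition bernoulliF2 (f : R) (a : 'F_2) : R := if a == 1 then f else 1 - f.

(* Fourier expansion: [a = 0] = (1 + (-1)^a) / 2, and the expectation of
   (-1)^(r . d) factors over the coordinates of r. *)
Lemma sum_bernoulli_orth n (f : R) (d : 'cV['F_2]_n) :
  \sum_(r : {ffun 'I_n -> 'F_2})
     (\prod_j bernoulliF2 f (r j)) * (\sum_j r j * d j 0 == 0)%:R
  = (1 + (1 - 2 * f) ^+ hweight d) / 2%:R.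
Proof.
under eq_bigr do rewrite eqF2_0_signF2 signF2_sum mulrA mulrDr mulr1 -big_split.
rewrite -mulr_suml big_split /= -(bigA_distr_bigA (fun j => bernoulliF2 f)).
rewrite -(bigA_distr_bigA (fun j a => bernoulliF2 f a * signF2 (a * d j 0))) /=.
congr ((_ + _) / _).
  by apply: big1 => j _; rewrite sum_F2 /bernoulliF2 subrK.
rewrite /hweight cardsE -prodr_const [RHS]big_mkcond; apply: eq_bigr => j _.
rewrite sum_F2 /bernoulliF2 /signF2 unfold_in mul0r mul1r eqxx /=.
by case: (F2_cases (d j 0)) => -> /=; ring.
Qed.

End Characters.

Lemma sum_mx_ffun (V : nmodType) m n (F : 'M['F_2]_(m, n) -> V) :
  \sum_A F A = \sum_(g : {ffun 'I_m -> {ffun 'I_n -> 'F_2}}) F (\matrix_(i, j) g i j).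
Proof.
rewrite (reindex (fun g : {ffun 'I_m -> {ffun 'I_n -> 'F_2}} => \matrix_(i, j) g i j)) //.
exists (fun A : 'M['F_2]_(m, n) => [ffun i => [ffun j => A i j]]) => [g _ | A _].
  by apply/ffunP => i; apply/ffunP => j; rewrite !ffunE mxE.
by apply/matrixP => i j; rewrite mxE !ffunE.
Qed.

Lemma mulmx_eq0_prod (R : comNzSemiRingType) m n (M : 'M['F_2]_(m, n)) (d : 'cV['F_2]_n) :
  ((M *m d == 0)%:R : R) = \prod_i (\sum_j M i j * d j 0 == 0)%:R.
Proof.
have [/eqP/matrixP Md0 | Md_neq0] := boolP (M *m d == 0).
  by rewrite big1 // => i _; move: (Md0 i 0); rewrite !mxE => ->; rewrite eqxx.
have [i Mdi] : exists i, \sum_j M i j * d j 0 != 0.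
  apply/existsP; apply: contraR Md_neq0; rewrite negb_exists => /forallP Md0.
  by apply/eqP/matrixP => i k; rewrite ord1 !mxE; apply/eqP; rewrite -[_ == _]negbK Md0.
by rewrite (bigD1 i) //= (negbTE Mdi) mul0r.
Qed.

Section HashFamily.
Variables (R : realType) (m n : nat) (f : R).

Lemma sum_weightA_kernel (d : 'cV['F_2]_n) :
  \sum_(A : 'M['F_2]_(m, n)) weightA f A * (A *m d == 0)%:R
  = ((1 + (1 - 2 * f) ^+ hweight d) / 2%:R) ^+ m.
Proof.
rewrite sum_mx_ffun; transitivity (\sum_(g : {ffun 'I_m -> {ffun 'I_n -> 'F_2}})
    \prod_i ((\prod_j bernoulliF2 f (g i j)) * (\sum_j g i j * d j 0 == 0)%:R)).
  apply: eq_bigr => g _; rewrite big_split mulmx_eq0_prod /weightA; congr (_ * _).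
    by apply: eq_bigr => i _; apply: eq_bigr => j _; rewrite mxE.
  by apply: eq_bigr => i _; congr (nat_of_bool (_ == _))%:R; apply: eq_bigr => j _; rewrite !mxE.
rewrite -(bigA_distr_bigA (fun i (r : {ffun 'I_n -> 'F_2}) =>
   (\prod_j bernoulliF2 f (r j)) * (\sum_j r j * d j 0 == 0)%:R)) /=.
by under eq_bigr do rewrite sum_bernoulli_orth; rewrite prodr_const card_ord.
Qed.

(* Pr[A d = 0] for every d of weight w, by sum_weightA_kernel. *)
Definition collision (w : nat) : R := (1 + (1 - 2 * f) ^+ w) ^+ m / 2%:R ^+ m.

Lemma collision0 : collision 0 = 1.
Proof. by rewrite /collision expr0 (_ : 1 + 1 = 2%:R) // divff // expf_neq0 // pnatr_eq0. Qed.

Definition hashP (h : 'M['F_2]_(m, n) * 'cV['F_2]_m) : R := weightA f h.1 * (2%:R ^+ m)^-1.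

Local Notation hits x h := ((h.1 *m x + h.2 == 0)%:R : R).

Lemma sum_hashP_hits2 (x y : 'cV['F_2]_n) :
  \sum_h hashP h * (hits x h * hits y h) = collision (hweight (y - x)) * (2%:R ^+ m)^-1.
Proof.
rewrite -(pair_bigA _ (fun A b => hashP (A, b) * (hits x (A, b) * hits y (A, b)))) /=.
have pick_b A : \sum_b hashP (A, b) * (hits x (A, b) * hits y (A, b))
    = hashP (A, 0) * ((A *m (y - x) == 0)%:R).
  rewrite (bigD1 (- (A *m x))) //= subrr eqxx mul1r mulmxBr big1 ?addr0 // => b b_neq.
  by rewrite [A *m x + b]addrC addr_eq0 (negbTE b_neq) mul0r mulr0.
rewrite (eq_bigr _ (fun A _ => pick_b A)) /hashP /= mulrC.
by under eq_bigr do rewrite mulrAC; rewrite -mulr_suml sum_weightA_kernel /collision expr_div_n mulrC.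
Qed.

Lemma sum_hashP_hits (x : 'cV['F_2]_n) : \sum_h hashP h * hits x h = (2%:R ^+ m)^-1.
Proof.
have := sum_hashP_hits2 x x; rewrite subrr hweight0 collision0 mul1r => <-.
by apply: eq_bigr => h _; case: (_ == 0); rewrite ?mulr1 ?mulr0.
Qed.

Lemma Sh_hits (T : {set 'cV['F_2]_n}) (h : 'M['F_2]_(m, n) * 'cV['F_2]_m) :
  ((Sh T h.1 h.2)%:R : R) = \sum_(x in T) hits x h.
Proof.
rewrite /Sh -sum1_card natr_sum [LHS]big_mkcond [RHS]big_mkcond /=.
by apply: eq_bigr => x _; rewrite inE; case: (x \in T); case: (_ == 0).
Qed.

Lemma hash_first_moment (T : {set 'cV['F_2]_n}) :
  \sum_h hashP h * (Sh T h.1 h.2)%:R = #|T|%:R * (2%:R ^+ m)^-1.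
Proof.
under eq_bigr do rewrite Sh_hits mulr_sumr.
by rewrite exchange_big /= (eq_bigr _ (fun x _ => sum_hashP_hits x)) sumr_const mulr_natl.
Qed.

Lemma hash_second_moment (T : {set 'cV['F_2]_n}) :
  \sum_h hashP h * (Sh T h.1 h.2)%:R ^+ 2
  = \sum_(x in T) \sum_(y in T) collision (hweight (y - x)) * (2%:R ^+ m)^-1.
Proof.
under eq_bigr do rewrite Sh_hits expr2 big_distrlr mulr_sumr.
rewrite exchange_big; apply: eq_bigr => x _ /=.
under eq_bigr do rewrite mulr_sumr.
by rewrite exchange_big; apply: eq_bigr => y _; exact: sum_hashP_hits2.
Qed.

End HashFamily.

Section SmallBias.
Variables (R : realType) (m n : nat) (f : R).
Hypotheses (f_ge0 : 0 <= f) (f_le_half : f <= 2%:R^-1).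
Local Notation coll := (collision m f).
Local Notation P := (@hashP R m n f).

Let bias_ge0 : 0 <= 1 - 2 * f. Proof. by move: f_ge0 f_le_half => *; lra. Qed.
Let bias_le1 : 1 - 2 * f <= 1. Proof. by move: f_ge0 => *; lra. Qed.

Lemma collision_ge0 w : 0 <= coll w.
Proof. by rewrite /collision divr_ge0 ?exprn_ge0 ?addr_ge0 ?exprn_ge0. Qed.

Lemma collision_antitone w1 w2 : (w1 <= w2)%N -> coll w2 <= coll w1.
Proof.
move=> le_w; rewrite /collision ler_pM2r ?invr_gt0 ?exprn_gt0 ?ltr0n //.
apply: lerXn2r; rewrite ?nnegrE ?addr_ge0 ?exprn_ge0 // lerD2l.
exact: ler_wiXn2l.
Qed.

Lemma collision_le_layers W (d : 'cV['F_2]_n) : d != 0 ->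
  coll (hweight d) <= coll W.+1
    + \sum_(1 <= w < W.+1) (hweight d == w)%:R * (coll w - coll W.+1).
Proof.
move=> d_neq0; have [le_dW | lt_Wd] := leqP (hweight d) W.
  rewrite (bigD1_seq (hweight d)) ?mem_index_iota ?hweight_gt0 ?iota_uniq //=.
  rewrite eqxx mul1r big1 => [|w /negbTE]; last by rewrite eq_sym => ->; rewrite mul0r.
  by rewrite addr0 addrC subrK.
rewrite big_nat big1 ?addr0 => [|w /andP [_ le_wW]]; first exact: collision_antitone.
by rewrite (_ : _ == w = false) ?mul0r //; apply: contraTF lt_Wd => /eqP ->; rewrite -leqNgt.
Qed.

(* A weight-w layer has at most 'C(n, w) vectors and coll is antitone, so the
   worst case fills the lightest layers first. *)
Lemma sum_collision_le W (D : {set 'cV['F_2]_n}) : 0 \notin D ->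
  \sum_(d in D) coll (hweight d)
  <= #|D|%:R * coll W.+1 + \sum_(1 <= w < W.+1) 'C(n, w)%:R * (coll w - coll W.+1).
Proof.
move=> D0; have d_neq0 d : d \in D -> d != 0 by apply: contraTneq => ->.
apply: le_trans (ler_sum _ (fun d dD => collision_le_layers W (d_neq0 d dD))) _.
rewrite big_split /= sumr_const mulr_natl lerD2l exchange_big /=.
apply: ler_sum_nat => w /andP [_ le_wW]; rewrite -mulr_suml.
apply: ler_wpM2r; first by rewrite subr_ge0 collision_antitone // ltnW.
apply: le_trans (_ : #|[set d : 'cV['F_2]_n | hweight d == w]|%:R <= _); last first.
  by rewrite ler_nat card_hweight.
rewrite -sum1_card natr_sum [leRHS]big_mkcond [leLHS]big_mkcond /=.
by apply: ler_sum => d _; rewrite inE; case: (d \in D); case: (_ == w).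
Qed.

Lemma wstar_spec q :
  (wstar n q <= n)%N /\ (\sum_(1 <= j < (wstar n q).+1) 'C(n, j) <= q.-1)%N.
Proof.
rewrite /wstar; have [|w sum_le ->] := @eq_bigmax_cond _
  (fun w : 'I_n.+1 => \sum_(1 <= j < w.+1) 'C(n, j) <= q.-1)%N (fun w => val w).
  by apply/card_gt0P; exists ord0; rewrite unfold_in /= big_geq.
by split; [rewrite -ltnS ltn_ord | exact: sum_le].
Qed.

Lemma eps_qE q : eps_q n m q f
  = \sum_(1 <= w < (wstar n q).+1) 'C(n, w)%:R * coll w + (rnq n q)%:R * coll (wstar n q).+1.
Proof. by rewrite /eps_q /collision; congr (_ + _); ring. Qed.

Lemma eps_q_ge0 q : 0 <= eps_q n m q f.
Proof. by rewrite eps_qE addr_ge0 ?sumr_ge0 // => *; rewrite mulr_ge0 ?collision_ge0. Qed.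

Lemma sum_collision_le_eps q (D : {set 'cV['F_2]_n}) : 0 \notin D -> #|D| = q.-1 ->
  \sum_(d in D) coll (hweight d) <= eps_q n m q f.
Proof.
move=> D0 card_D; apply: le_trans (sum_collision_le (wstar n q) D0) _.
have card_split : #|D| = (\sum_(1 <= w < (wstar n q).+1) 'C(n, w) + rnq n q)%N.
  by rewrite card_D subnKC //; case: (wstar_spec q).
rewrite eps_qE card_split natrD natr_sum mulrDl mulr_suml.
rewrite addrAC -big_split /= (eq_bigr (fun w => 'C(n, w)%:R * coll w)) // => w _.
by rewrite mulrBr addrC subrK.
Qed.

Lemma sum_collision_row (T : {set 'cV['F_2]_n}) x : x \in T ->
  \sum_(y in T) coll (hweight (y - x)) <= 1 + eps_q n m #|T| f.
Proof.
move=> xT; rewrite (bigD1 x) //= subrr hweight0 collision0 lerD2l.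
have sub_inj : injective (fun y : 'cV['F_2]_n => y - x) by exact: addIr.
have -> : \sum_(y in T | y != x) coll (hweight (y - x))
    = \sum_(d in [set y - x | y in T :\ x]) coll (hweight d).
  rewrite big_imset /=; last exact: in2W.
  by apply: eq_bigl => y; rewrite in_setD1 andbC.
apply: sum_collision_le_eps.
  by apply/imsetP => -[y]; rewrite in_setD1 => /andP [/negbTE yx _] /eqP; rewrite eq_sym subr_eq0 yx.
by rewrite card_imset // (cardsD1 x T) xT.
Qed.

Lemma hashP_ge0 h : 0 <= P h.
Proof.
rewrite /hashP /weightA mulr_ge0 ?invr_ge0 ?exprn_ge0 ?ler0n // prodr_ge0 // => i _.
rewrite prodr_ge0 // => j _; case: ifP => // _.
by rewrite subr_ge0 (le_trans f_le_half) // invf_le1 ?ler1n.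
Qed.

Lemma hash_second_moment_le (T : {set 'cV['F_2]_n}) :
  \sum_h P h * (Sh T h.1 h.2)%:R ^+ 2
  <= (1 + eps_q n m #|T| f) * \sum_h P h * (Sh T h.1 h.2)%:R.
Proof.
rewrite hash_second_moment hash_first_moment mulrCA mulr_natl -sumr_const.
apply: ler_sum => x xT; rewrite -mulr_suml ler_wpM2r ?invr_ge0 ?exprn_ge0 ?ler0n //.
exact: sum_collision_row.
Qed.

Lemma PrSh_ge1E (S : {set 'cV['F_2]_n}) :
  PrSh_ge1 m f S = \sum_h P h * (if (1 <= Sh S h.1 h.2)%N then 1 else 0).
Proof. by rewrite /PrSh_ge1 pair_bigA. Qed.

Lemma PrSh_ge1_subset (T S : {set 'cV['F_2]_n}) : T \subset S ->
  \sum_h P h * (if (1 <= Sh T h.1 h.2)%N then 1 else 0) <= PrSh_ge1 m f S.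
Proof.
move=> sub_TS; rewrite PrSh_ge1E; apply: ler_sum => h _; rewrite ler_wpM2l ?hashP_ge0 //.
have le_Sh : (Sh T h.1 h.2 <= Sh S h.1 h.2)%N.
  apply/subset_leq_card/subsetP => x; rewrite !inE => /andP [xT ->].
  by rewrite (subsetP sub_TS).
case: ifP => [ge1 | _]; first by rewrite (leq_trans ge1 le_Sh).
by case: ifP; rewrite ?ler01.
Qed.

End SmallBias.

Theorem lemma3 (R : realType) (n m : nat) (f : R) (S : {set 'cV['F_2]_n}) :
  (1 <= m)%N -> (m <= n)%N -> 0 <= f -> f <= 2%:R^-1 ->
  forall z : nat, (1 <= z)%N -> (z <= 2 ^ n)%N ->
    (1 + 2%:R ^+ (2 * m) * vq n m z f / (z%:R ^+ 2))^-1 > PrSh_ge1 m f S ->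
    (#|S| <= z)%N.
Proof.
move=> _ _ f_ge0 f_le_half z z_ge1 _; rewrite leqNgt; apply: contraTN => lt_zS.
have [T sub_TS card_T] := subset_of_card (ltnW lt_zS).
set s := 1 + eps_q n m z f.
have s_gt0 : 0 < s by rewrite ltr_pwDl ?eps_q_ge0.
have := hash_second_moment_le m f_ge0 f_le_half T; rewrite card_T => second_le.
have := second_moment_bound (X := fun h => Sh T h.1 h.2)
  (hashP_ge0 f_ge0 f_le_half) s_gt0 second_le.
rewrite hash_first_moment card_T -ler_pdivrMl // => first_le.
have -> : 1 + 2%:R ^+ (2 * m) * vq n m z f / z%:R ^+ 2 = 2%:R ^+ m * s / z%:R.
  rewrite /vq -/s mulnC exprM; field.
  by rewrite !gt_eqF ?ltr0n ?exprn_gt0 ?ltr0n.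
rewrite -leNgt invf_div; apply: le_trans (PrSh_ge1_subset m f_ge0 f_le_half sub_TS).
by rewrite invfM mulrA mulrC.
Qed.
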